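(* Let $\mathcal{A}=\{A_1,\dots,A_l\}$ be a finite family of real $n\times n$ matrices, each having a strictly dominant eigenvalue $\lambda_i$. For each $i$ let $\hat r_i$ and $\hat h_i$ be arbitrary nonzero right and left eigenvectors of $A_i$ for $\lambda_i$ (so $A_i\hat r_i=\lambda_i\hat r_i$, $\hat h_i^TA_i=\lambda_i\hat h_i^T$). Construct vectors $\tilde h_1,\dots,\tilde h_l$ and $\tilde r_1,\dots,\tilde r_l$ as follows: $\tilde h_1:=\hat h_1$; for each $k$, $\tilde r_k\in\{\hat r_k,-\hat r_k\}$ is chosen such that $\langle\tilde h_1,\tilde r_k\rangle\ge0$; for each $j>1$, $\tilde h_j\in\{\hat h_j,-\hat h_j\}$ is chosen such that $\langle\tilde h_j,\tilde r_j\rangle\ge0$ (any admissible choice when there is ambiguity). Let $\tilde R\in\mathbb{R}^{n\times l}$ have columns $\tilde r_k$ and $\tilde H\in\mathbb{R}^{l\times n}$ have rows $\tilde h_j^T$, and set $\mathcal{K}_{inner}(\mathcal{A}):=\{\tilde Rp:p\ge0\}$, $\mathcal{K}_{outer}(\mathcal{A}):=\{r:\tilde Hr\ge0\}$. Suppose there exists $R\in\mathbb{R}^{n\times m}$ such that $\{Rp:p\ge0\}$ is a proper cone and for each $i$ there exist $\alpha_i\in\mathbb{R}$ and $P_i\in\mathbb{R}^{m\times m}$ with all entries strictly positive such that $(\alpha_iI+A_i)R=RP_i$. Then $\langle\tilde h_j,\tilde r_k\rangle>0$ for all $j,k$, i.e. $\tilde H\tilde R>0$ entrywise; equivalently, every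 $r\in\mathcal{K}_{inner}(\mathcal{A})\setminus\{0\}$ lies in $\operatorname{int}(\mathcal{K}_{outer}(\mathcal{A}))$.
   Context: Inequalities between vectors/matrices are entrywise. A proper cone is a set $\mathcal{K}\subseteq\mathbb{R}^n$ closed under nonnegative linear combinations, with nonempty interior, and such that $r\in\mathcal{K}\setminus\{0\}$ implies $-r\notin\mathcal{K}$. A real square matrix $A$ has a strictly dominant eigenvalue if it has a real, algebraically simple eigenvalue $\lambda$ with $\operatorname{Re}\mu<\lambda$ for every other eigenvalue $\mu$. *)

(* Reals modelled by an arbitrary real closed field R. *)
From HB Require Import structures.
From mathcomp Require Import all_boot all_order all_algebra.
Set Implicit Arguments. Unset Strict Implicit. Unset Printing Implicit Defensive.
Import Order.TTheory GRing.Theory Num.Theory.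
Local Open Scope ring_scope.

Section Defs.
Variable R : rcfType.

(* Complex numbers modelled as pairs (Re, Im) over R; only used to evaluate
   the characteristic polynomial at complex points. *)
Definition cadd (x y : R * R) : R * R := (x.1 + y.1, x.2 + y.2).
Definition cmul (x y : R * R) : R * R :=
  (x.1 * y.1 - x.2 * y.2, x.1 * y.2 + x.2 * y.1).
Definition ceval (p : {poly R}) (z : R * R) : R * R :=
  foldr (fun c acc => cadd (cmul acc z) (c, 0)) (0, 0) (polyseq p).

(* lam is a real, algebraically simple eigenvalue of A, and every other
   (complex) eigenvalue mu satisfies Re mu < lam. *)
Definition strictly_dominant_eigenvalue (n : nat) (A : 'M[R]_n) (lam : R) : Prop :=
  [/\ eigenvalue A lam,
      ~~ (('X - lam%:P) ^+ 2 %| char_poly A)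
    & forall z : R * R, ceval (char_poly A) z = (0, 0) -> z <> (lam, 0) -> z.1 < lam].

Definition dotv (n : nat) (u v : 'cV[R]_n) : R := \sum_(i < n) u i 0 * v i 0.

(* Proper cone (as in the context), interior taken w.r.t. the standard
   (sup-norm) topology of R^n. *)
Definition proper_cone (n : nat) (K : 'cV[R]_n -> Prop) : Prop :=
  [/\ (forall (x y : 'cV[R]_n) (a b : R), K x -> K y -> 0 <= a -> 0 <= b -> K (a *: x + b *: y)),
      (exists x : 'cV[R]_n, exists2 eps : R, 0 < eps &
          forall y : 'cV[R]_n, (forall i, `|y i 0 - x i 0| < eps) -> K y)
    & (forall r, K r -> r != 0 -> ~ K (- r))].

Definition col_cone (n m : nat) (Rm : 'M[R]_(n, m)) : 'cV[R]_n -> Prop :=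
  fun x => exists2 p : 'cV[R]_m, (forall a, 0 <= p a 0) & x = Rm *m p.

End Defs.

(* Fix i and write K = {R p : p >= 0}.  Since P_i is entrywise
   positive, Perron's theorem gives rho > 0 and x > 0 with P_i x = rho x; then
   u = R x lies in K, is nonzero because K is pointed, and is an eigenvector
   of A_i for the real eigenvalue rho - alpha_i <= lambda_i.  For a left
   eigenvector h of lambda_i, g = R^T h is a nonzero left eigenvector of P_i
   for alpha_i + lambda_i >= rho, which forces g to be strictly positive or
   strictly negative; hence +h or -h is positive on K \ {0}, <h, u> <> 0,
   rho - alpha_i = lambda_i and the right eigenspace of lambda_i is spanned by
   u, so rhat_i = +-(a nonzero vector of K).  The sign conventions of the
   tilde construction then orient all vectors consistently with h~_1. *)

From HB Require Import structures.
From mathcomp Require Import all_boot all_order all_algebra.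
From mathcomp Require Import ring lra.
From mathcomp Require polyrcf.
Set Implicit Arguments. Unset Strict Implicit. Unset Printing Implicit Defensive.
Import Order.TTheory GRing.Theory Num.Theory.
Local Open Scope ring_scope.

Section Positivity.
Variable R : rcfType.

Lemma sum_gt0_witness (I : finType) (F : I -> R) a :
  (forall i, 0 <= F i) -> 0 < F a -> 0 < \sum_i F i.
Proof. by move=> F_ge0 Fa_gt0; rewrite (bigD1 a) //= ltr_pwDl // sumr_ge0. Qed.

Lemma cV_nz_entry k (x : 'cV[R]_k) : x != 0 -> exists a, x a 0 != 0.
Proof.
move=> x_nz; apply/existsP; apply: contraNT x_nz => /existsPn x0.
by apply/eqP/matrixP => i j; rewrite ord1 mxE; apply/eqP/negPn.
Qed.

Lemma pos_dot_gt0 k (g p : 'cV[R]_k) : (forall a, 0 < g a 0) ->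
  (forall a, 0 <= p a 0) -> p != 0 -> 0 < \sum_a g a 0 * p a 0.
Proof.
move=> g_gt0 p_ge0 /cV_nz_entry [a pa_nz].
apply: (sum_gt0_witness (a := a)) => [i|]; first by rewrite mulr_ge0 // ltW.
by rewrite mulr_gt0 // lt_neqAle eq_sym pa_nz p_ge0.
Qed.

Lemma nonneg_row_le k (b : 'rV[R]_k) (w w' : 'cV[R]_k) : (forall j, 0 <= b 0 j) ->
  (forall i, w i 0 <= w' i 0) -> (b *m w) 0 0 <= (b *m w') 0 0.
Proof. by move=> b_ge0 le_ww'; rewrite !mxE ler_sum // => j _; rewrite ler_wpM2l. Qed.

Lemma ratio_lb k (u v : 'cV[R]_k) : (forall i, 0 < u i 0) -> (forall i, 0 < v i 0) ->
  exists2 c, 0 < c & forall i, c * u i 0 <= v i 0.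
Proof.
case: k u v => [|k] u v u_gt0 v_gt0; first by exists 1 => // -[].
pose i0 := [arg min_(i < ord0) (v i 0 / u i 0)]%O.
exists (v i0 0 / u i0 0); first by rewrite divr_gt0.
by move=> i; rewrite -ler_pdivlMr // /i0; case: arg_minP => // j _; apply.
Qed.

(* A matrix N such that N w >= 0 forces w >= 0 is invertible:
   both a kernel vector and its opposite would be nonnegative. *)
Lemma nonneg_reflecting_unitmx k (N : 'M[R]_k) :
  (forall w : 'cV_k, (forall i, 0 <= (N *m w) i 0) -> forall i, 0 <= w i 0) ->
  N \in unitmx.
Proof.
move=> N_refl; rewrite unitmxE unitfE -det_tr; apply/negP => /det0P [v v_nz vN].
have Nv : N *m v^T = 0 by rewrite -[N]trmxK -trmx_mul vN trmx0.
have v_ge0 : forall i, 0 <= v^T i 0 by apply: N_refl => i; rewrite Nv mxE.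
have v_le0 : forall i, 0 <= (- v^T) i 0.
  by apply: N_refl => i; rewrite mulmxN Nv oppr0 mxE.
move/negP: v_nz; apply; apply/eqP/matrixP => i j; rewrite ord1 mxE.
have := v_ge0 j; have := v_le0 j; rewrite !mxE; lra.
Qed.

End Positivity.

(* This brackets the Perron root in the induction step. *)
Section Bracket.
Variable R : rcfType.

Lemma fixed_point_bracket (f : R -> R) (r0 a K1 K2 : R) :
  0 <= r0 -> 0 <= a -> 0 < K1 -> 0 <= K2 ->
  (forall t, r0 < t -> K1 / (t - r0) <= f t <= a + K2 / (t - r0)) ->
  exists t1 t2, [/\ r0 < t1, t1 <= t2, t1 < f t1 & f t2 < t2].
Proof.
move=> r0_ge0 a_ge0 K1_gt0 K2_ge0 f_bd.
have den_gt0 : 0 < K1 + r0 + 1 by rewrite addr_gt0 // ltr_wpDr.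
pose d := K1 / (K1 + r0 + 1).
have d_gt0 : 0 < d by rewrite divr_gt0.
have d_lt1 : d < 1 by rewrite ltr_pdivrMr // mul1r -addrA ltr_pwDr // ltr_wpDl.
exists (r0 + d), (r0 + a + K2 + 1); split; [lra | lra | |].
- have /andP [+ _] := f_bd (r0 + d) ltac:(lra).
  have -> : K1 / (r0 + d - r0) = K1 + r0 + 1.
    by rewrite addrC addKr /d invf_div mulrCA divff ?mulr1 // gt_eqF.
  lra.
- have /andP [_] := f_bd (r0 + a + K2 + 1) ltac:(lra).
  have : K2 / (r0 + a + K2 + 1 - r0) <= K2.
    by rewrite ler_pdivrMr; [nra | lra].
  lra.
Qed.

End Bracket.

Section Eigenvalues.
Variable R : rcfType.

Lemma ceval_real (p : {poly R}) x : ceval p (x, 0) = (p.[x], 0).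
Proof.
rewrite /ceval /horner; elim: (polyseq p) => //= c s ->.
by rewrite /cadd /cmul /=; congr pair; ring.
Qed.

Lemma char_poly_tr n (A : 'M[R]_n) : char_poly A^T = char_poly A.
Proof.
rewrite /char_poly -det_tr; congr (\det _).
by apply/matrixP => i j; rewrite !mxE eq_sym.
Qed.

(* Eigenvalues with a right eigenvector are roots of the characteristic
   polynomial (the library states this for left eigenvectors). *)
Lemma right_eigen_root n (A : 'M[R]_n) (u : 'cV[R]_n) mu :
  u != 0 -> A *m u = mu *: u -> root (char_poly A) mu.
Proof.
move=> u_nz Au; rewrite -char_poly_tr -eigenvalue_root_char.
by apply/eigenvalueP; exists u^T; rewrite ?trmx_eq0 // -trmx_mul Au linearZ.
Qed.

Lemma dominant_real_root_le n (A : 'M[R]_n) lam mu :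
  strictly_dominant_eigenvalue A lam -> root (char_poly A) mu -> mu <= lam.
Proof.
case=> _ _ dom /rootP root_mu; rewrite le_eqVlt; apply/orP.
have [->|ne_mu_lam] := eqVneq mu lam; [by left | right].
have := dom (mu, 0); rewrite ceval_real root_mu; apply=> //.
by case=> /eqP; rewrite (negPf ne_mu_lam).
Qed.

Lemma char_poly_mx_horner k (D : 'M[R]_k) t :
  map_mx (horner_eval t) (char_poly_mx D) = t%:M - D.
Proof.
by apply/matrixP => i j; rewrite !mxE /= horner_evalE hornerD hornerN hornerMn hornerX hornerC.
Qed.

Lemma char_poly_horner k (D : 'M[R]_k) t : (char_poly D).[t] = \det (t%:M - D).
Proof. by rewrite /char_poly -horner_evalE -det_map_mx char_poly_mx_horner. Qed.

End Eigenvalues.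

Section InversePositivity.
Variable R : rcfType.
Variables (k : nat) (D : 'M[R]_k) (y : 'cV[R]_k) (rD : R).
Hypotheses (D_ge0 : forall i j, 0 <= D i j) (y_gt0 : forall i, 0 < y i 0).
Hypothesis Dy : D *m y = rD *: y.

Lemma resolvent_eigen t : (t%:M - D) *m y = (t - rD) *: y.
Proof. by rewrite mulmxBl mul_scalar_mx Dy scalerBl. Qed.

(* If (t I - D) w >= 0 then w >= 0: compare w with the multiple of y that
   touches it at the entry of minimal ratio w_j / y_j. *)
Lemma resolvent_nonneg t (w : 'cV[R]_k) : rD < t ->
  (forall i, 0 <= ((t%:M - D) *m w) i 0) -> forall i, 0 <= w i 0.
Proof.
move=> lt_rD_t Nw_ge0 i; rewrite leNgt; apply/negP => wi_lt0.
pose i0 := [arg min_(j < i) (w j 0 / y j 0)]%O.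
have min_i0 (j : 'I_k) : w i0 0 / y i0 0 <= w j 0 / y j 0.
  by rewrite /i0; case: arg_minP => // l _; apply.
set th := w i0 0 / y i0 0 in min_i0.
have th_lt0 : th < 0 by apply: le_lt_trans (min_i0 i) _; rewrite pmulr_llt0 ?invr_gt0.
pose z := w - th *: y.
have z_ge0 j : 0 <= z j 0 by rewrite !mxE subr_ge0 -ler_pdivlMr.
have z_i0 : z i0 0 = 0 by rewrite !mxE /th divfK ?subrr ?gt_eqF.
have : ((t%:M - D) *m z) i0 0 <= 0.
  rewrite mulmxBl mul_scalar_mx !mxE; move: z_i0; rewrite !mxE => ->.
  rewrite mulr0 sub0r oppr_le0.
  by apply: sumr_ge0 => j _; apply: mulr_ge0.
rewrite /z mulmxBr -scalemxAr resolvent_eigen scalerA !mxE.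
have : th * (t - rD) * y i0 0 < 0 by rewrite pmulr_llt0 // pmulr_llt0 // subr_gt0.
have := Nw_ge0 i0; rewrite mxE; lra.
Qed.

Lemma resolvent_le t (w w' : 'cV[R]_k) : rD < t ->
  (forall i, ((t%:M - D) *m w) i 0 <= ((t%:M - D) *m w') i 0) ->
  forall i, w i 0 <= w' i 0.
Proof.
move=> lt_rD_t le_Nw i; rewrite -subr_ge0.
have Ndiff j : 0 <= ((t%:M - D) *m (w' - w)) j 0.
  by rewrite mulmxBr mxE [X in _ + X]mxE subr_ge0.
by have := resolvent_nonneg lt_rD_t Ndiff i; rewrite !mxE.
Qed.

Lemma resolvent_unitmx t : rD < t -> t%:M - D \in unitmx.
Proof. by move=> lt_rD_t; apply: nonneg_reflecting_unitmx => w; apply: resolvent_nonneg. Qed.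

(* Schur-complement step of Perron's theorem: for a positive matrix written
   as the block matrix [a b; c D], a fixed point rho = a + b (rho I - D)^-1 c
   with rho > rD yields a positive Perron vector (1, (rho I - D)^-1 c). *)
Section SchurComplement.
Variables (a : R) (b : 'rV[R]_k) (c : 'cV[R]_k).
Hypotheses (rD_ge0 : 0 <= rD) (a_ge0 : 0 <= a).
Hypotheses (b_ge0 : forall j, 0 <= b 0 j) (by_gt0 : 0 < (b *m y) 0 0).
Hypothesis c_gt0 : forall i, 0 < c i 0.

Definition resolvent_sol t : 'cV[R]_k := invmx (t%:M - D) *m c.

Definition schur_fn t : R := a + (b *m resolvent_sol t) 0 0.

Lemma resolvent_solE t : rD < t -> (t%:M - D) *m resolvent_sol t = c.
Proof. by move=> lt_rD_t; rewrite mulmxA mulmxV ?mul1mx ?resolvent_unitmx. Qed.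

(* For t > rD the solution is positive: t z = c + D z > 0. *)
Lemma resolvent_sol_gt0 t : rD < t -> forall i, 0 < resolvent_sol t i 0.
Proof.
move=> lt_rD_t i.
have z_ge0 : forall j, 0 <= resolvent_sol t j 0.
  by apply: (resolvent_nonneg lt_rD_t) => j; rewrite resolvent_solE // ltW.
move: (resolvent_solE lt_rD_t) z_ge0; move: (resolvent_sol t) => z Nz z_ge0.
have tz : t *: z = c + D *m z by rewrite -Nz mulmxBl mul_scalar_mx subrK.
have := congr1 (fun M : 'cV[R]_k => M i 0) tz; rewrite /= !mxE => tz_i.
have : 0 < t * z i 0.
  by rewrite tz_i ltr_pwDl // sumr_ge0 // => j _; rewrite mulr_ge0.
by rewrite pmulr_rgt0 // (le_lt_trans rD_ge0).
Qed.

(* Comparing c with y gives bounds K1/(t - rD) <= f t <= a + K2/(t - rD). *)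
Lemma schur_fn_bounds : exists K1 K2, [/\ 0 < K1, 0 <= K2 &
  forall t, rD < t -> K1 / (t - rD) <= schur_fn t <= a + K2 / (t - rD)].
Proof.
have [k1 k1_gt0 k1y_le_c] := ratio_lb y_gt0 c_gt0.
have [k2 k2_gt0 k2c_le_y] := ratio_lb c_gt0 y_gt0.
have beta_gt0 := by_gt0; set beta := (b *m y) 0 0 in beta_gt0 *.
exists (k1 * beta), (k2^-1 * beta); split; [by rewrite mulr_gt0 | by rewrite mulr_ge0 ?invr_ge0 ?ltW |].
move=> t lt_rD_t; have tr_gt0 : 0 < t - rD by rewrite subr_gt0.
have scaled_y e : (t%:M - D) *m ((e / (t - rD)) *: y) = e *: y.
  by rewrite -scalemxAr resolvent_eigen scalerA divfK // gt_eqF.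
have b_scaled e : (b *m (e *: y)) 0 0 = e * beta by rewrite -scalemxAr mxE.
have lo : forall i, (k1 / (t - rD) *: y) i 0 <= resolvent_sol t i 0.
  apply: (resolvent_le lt_rD_t) => i.
  by rewrite scaled_y resolvent_solE // mxE; apply: k1y_le_c.
have hi : forall i, resolvent_sol t i 0 <= (k2^-1 / (t - rD) *: y) i 0.
  apply: (resolvent_le lt_rD_t) => i.
  by rewrite scaled_y resolvent_solE // mxE mulrC ler_pdivlMr // mulrC.
have := nonneg_row_le b_ge0 lo; have := nonneg_row_le b_ge0 hi.
rewrite !b_scaled [k1 * _ / _]mulrAC [k2^-1 * _ / _]mulrAC /schur_fn => ub lb.
by apply/andP; split; [apply: le_trans lb _; rewrite lerDr | rewrite lerD2l].
Qed.

(* On (rD, +oo), det(t I - D) (f t - t) is a polynomial in t (via the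
   adjugate), so the intermediate value theorem applies to it. *)
Lemma schur_poly : exists G : {poly R}, forall t, rD < t ->
  G.[t] = \det (t%:M - D) * (schur_fn t - t).
Proof.
pose Np := char_poly_mx D.
exists (\det Np * (a%:P - 'X) + (map_mx polyC b *m \adj Np *m map_mx polyC c) 0 0).
move=> t lt_rD_t; set N := t%:M - D.
have polyC_t k1 k2 (M : 'M[R]_(k1, k2)) : map_mx (horner_eval t) (map_mx polyC M) = M.
  by apply/matrixP => i j; rewrite !mxE horner_evalE hornerC.
have det_nz : \det N != 0 by rewrite -unitfE -unitmxE resolvent_unitmx.
rewrite hornerD hornerM -!horner_evalE -det_map_mx char_poly_mx_horner -/N.
have -> : horner_eval t ((map_mx polyC b *m \adj Np *m map_mx polyC c) 0 0) =
          (b *m \adj N *m c) 0 0.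
  rewrite -[LHS](mxE map_mx_key (fun i j => horner_eval t (_ i j))) -/(map_mx _ _).
  by rewrite !map_mxM map_mx_adj char_poly_mx_horner !polyC_t.
rewrite /schur_fn /resolvent_sol /invmx resolvent_unitmx // -/N.
rewrite -scalemxAl -scalemxAr [X in _ = _ * (_ + X - _)]mxE mulmxA horner_evalE !hornerE.
by field.
Qed.

(* det(t I - D) has no root beyond rD, hence a constant sign there. *)
Lemma det_resolvent_pos t1 t2 : rD < t1 -> t1 <= t2 ->
  0 < \det (t1%:M - D) * \det (t2%:M - D).
Proof.
move=> lt_rD_t1 le_t12; rewrite ltNge; apply/negP => sign_change.
have : (char_poly D).[t1] * (char_poly D).[t2] <= 0 by rewrite !char_poly_horner.
move/(polyrcf.poly_ivt le_t12) => [t t_in root_t].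
have lt_rD_t : rD < t by apply: lt_le_trans lt_rD_t1 _; rewrite (itvP t_in).
move: (resolvent_unitmx lt_rD_t).
by rewrite unitmxE unitfE -char_poly_horner (rootP root_t) eqxx.
Qed.

Lemma schur_fixed_point : exists2 rho, rD < rho & schur_fn rho = rho.
Proof.
have [K1 [K2 [K1_gt0 K2_ge0 f_bd]]] := schur_fn_bounds.
have [t1 [t2 [lt_rD_t1 le_t12 f_t1 f_t2]]] :=
  fixed_point_bracket rD_ge0 a_ge0 K1_gt0 K2_ge0 f_bd.
have lt_rD_t2 : rD < t2 := lt_le_trans lt_rD_t1 le_t12.
have [G G_t] := schur_poly.
have [rho rho_in /rootP G_rho] : {rho | rho \in `[t1, t2] & root G rho}.
  apply: polyrcf.poly_ivt => //; rewrite !G_t // mulrACA pmulr_rle0.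
    by rewrite pmulr_rle0 ?subr_gt0 // subr_le0 ltW.
  exact: det_resolvent_pos.
have lt_rD_rho : rD < rho by apply: lt_le_trans lt_rD_t1 _; rewrite (itvP rho_in).
exists rho => //; move/eqP: G_rho; rewrite G_t // mulf_eq0 subr_eq0.
have /negPf -> : \det (rho%:M - D) != 0 by rewrite -unitfE -unitmxE resolvent_unitmx.
by move=> /eqP.
Qed.

End SchurComplement.
End InversePositivity.

Section Perron.
Variable R : rcfType.

(* For P of size m + 2 the lower-right block D has a Perron pair (rD, y)
   by induction; a Schur fixed point rho > rD then gives the Perron vector
   (1, (rho I - D)^-1 c). *)
Lemma perron m (P : 'M[R]_m) : (0 < m)%N -> (forall i j, 0 < P i j) ->
  exists rho (x : 'cV[R]_m), [/\ 0 < rho, forall i, 0 < x i 0 & P *m x = rho *: x].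
Proof.
case: m P => // m P _; elim: m P => [|m IH] P P_gt0.
  exists (P 0 0), (const_mx 1); split => [|i|]; rewrite ?mxE //.
  by apply/matrixP => i j; rewrite !mxE big_ord1 !ord1 !mxE mulr1.
pose D : 'M_m.+1 := \matrix_(i, j) P (lift ord0 i) (lift ord0 j).
have [rD [y [rD_gt0 y_gt0 Dy]]] := IH D (fun i j => ltac:(by rewrite mxE)).
pose b : 'rV_m.+1 := \row_j P ord0 (lift ord0 j).
pose c : 'cV_m.+1 := \col_i P (lift ord0 i) ord0.
have D_ge0 i j : 0 <= D i j by rewrite mxE ltW.
have b_ge0 j : 0 <= b 0 j by rewrite mxE ltW.
have c_gt0 i : 0 < c i 0 by rewrite mxE.
have by_gt0 : 0 < (b *m y) 0 0.
  rewrite mxE (sum_gt0_witness (a := ord0)) // => [j|]; last by rewrite mulr_gt0 ?mxE.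
  by rewrite mulr_ge0 // ltW.
have [rho lt_rD_rho f_rho] := schur_fixed_point D_ge0 y_gt0 Dy (ltW rD_gt0)
  (ltW (P_gt0 0 0)) b_ge0 by_gt0 c_gt0.
have z_gt0 := resolvent_sol_gt0 D_ge0 y_gt0 Dy (ltW rD_gt0) c_gt0 lt_rD_rho.
have /matrixP Nz := resolvent_solE D_ge0 y_gt0 Dy c lt_rD_rho.
move: f_rho z_gt0 Nz; rewrite /schur_fn; move: (resolvent_sol D c rho) => z f_rho z_gt0 Nz.
pose x : 'cV_m.+2 := \col_i (if unlift ord0 i is Some i' then z i' 0 else 1).
exists rho, x; split; first exact: lt_trans rD_gt0 lt_rD_rho.
  by move=> i; rewrite mxE; case: unliftP.
apply/matrixP => i j; rewrite ord1 !mxE big_ord_recl !mxE unlift_none mulr1.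
under eq_bigr => k _ do rewrite mxE liftK.
case: (unliftP ord0 i) => [i'|] -> /=.
  move: (Nz i' 0); rewrite mulmxBl mul_scalar_mx !mxE.
  under [X in _ - X = _]eq_bigr => k _ do rewrite mxE.
  lra.
by rewrite mulr1 -f_rho mxE; congr (_ + _); apply: eq_bigr => k _; rewrite mxE.
Qed.

End Perron.

Section PositiveLeftEigenvectors.
Variable R : rcfType.

Lemma strict_triangle (I : finType) (t : I -> R) a b : 0 < t a -> t b < 0 ->
  `|\sum_i t i| < \sum_i `|t i|.
Proof.
move=> ta_gt0 tb_lt0; rewrite ltr_norml; apply/andP; split.
  rewrite -subr_gt0 opprK -big_split /= (sum_gt0_witness (a := a)) // => [i|].
    by have := ler_norm (- t i); rewrite normrN; lra.
  by rewrite gtr0_norm // addr_gt0.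
rewrite -subr_gt0 -sumrN -big_split /= (sum_gt0_witness (a := b)) // => [i|].
  by rewrite subr_ge0 ler_norm.
by rewrite ltr0_norm //; lra.
Qed.

Variables (m : nat) (P : 'M[R]_m).
Hypothesis P_gt0 : forall a b, 0 < P a b.

Lemma left_eigvec_semipos (g : 'cV[R]_m) nu : g^T *m P = nu *: g^T ->
  (forall a, 0 <= g a 0) -> g != 0 -> forall a, 0 < g a 0.
Proof.
move=> gP g_ge0 /cV_nz_entry [a0 ga0_nz] c.
have := congr1 (fun M : 'rV_m => M 0 c) gP; rewrite /= !mxE => gPc.
have : 0 < nu * g c 0.
  rewrite -gPc (sum_gt0_witness (a := a0)) // => [i|]; rewrite mxE.
    by rewrite mulr_ge0 // ltW.
  by rewrite mulr_gt0 // lt_neqAle eq_sym ga0_nz g_ge0.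
move=> nu_gc_gt0; rewrite lt_def g_ge0 andbT.
by apply: contraTneq nu_gc_gt0 => ->; rewrite mulr0 ltxx.
Qed.

Variables (x : 'cV[R]_m) (rho : R).
Hypotheses (x_gt0 : forall a, 0 < x a 0) (Px : P *m x = rho *: x).

(* A left eigenvector with entries of both signs has an eigenvalue of
   modulus smaller than the Perron root rho: pair |g| with the Perron vector x. *)
Lemma left_eigvec_mixed_sign (g : 'cV[R]_m) nu a b :
  g^T *m P = nu *: g^T -> 0 < g a 0 -> g b 0 < 0 -> `|nu| < rho.
Proof.
move=> gP ga_gt0 gb_lt0; pose ga : 'rV_m := \row_i `|g i 0|.
have gaP c : `|nu| * ga 0 c < (ga *m P) 0 c.
  have gPc : \sum_i g i 0 * P i c = nu * g c 0.
    move: (congr1 (fun M : 'rV_m => M 0 c) gP); rewrite /= !mxE => <-.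
    by apply: eq_bigr => i _; rewrite mxE.
  rewrite /ga !mxE -normrM -gPc.
  under [X in _ < X]eq_bigr => i _ do rewrite mxE -(gtr0_norm (P_gt0 i c)) -normrM.
  by apply: (strict_triangle (a := a) (b := b)); rewrite ?mulr_gt0 ?pmulr_llt0.
have S_gt0 : 0 < (ga *m x) 0 0.
  rewrite mxE (sum_gt0_witness (a := a)) // => [i|]; rewrite !mxE.
    by rewrite mulr_ge0 // ltW.
  by rewrite mulr_gt0 // normr_gt0 gt_eqF.
rewrite -(ltr_pM2r S_gt0).
have -> : rho * (ga *m x) 0 0 = ((ga *m P) *m x) 0 0.
  by rewrite -mulmxA Px -scalemxAr [RHS]mxE.
rewrite [X in _ * X < _]mxE [X in _ < X]mxE mulr_sumr; apply: ltr_sum => [|i _].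
  by apply/hasP; exists a; rewrite ?mem_index_enum.
by rewrite mulrA ltr_pM2r.
Qed.

Lemma left_eigvec_strict_sign (g : 'cV[R]_m) nu : g^T *m P = nu *: g^T ->
  g != 0 -> rho <= nu -> (forall a, 0 < g a 0) \/ (forall a, 0 < (- g) a 0).
Proof.
move=> gP g_nz le_rho_nu.
have not_mixed a b : 0 < g a 0 -> g b 0 < 0 -> False.
  move=> ga gb; have := left_eigvec_mixed_sign gP ga gb.
  by have := ler_norm nu; lra.
case: (boolP [exists a, 0 < g a 0]) => [/existsP [a ga_gt0]|/existsPn no_pos].
  left; apply: (left_eigvec_semipos gP) => // b; rewrite leNgt.
  by apply/negP => /(not_mixed _ _ ga_gt0).
right; apply: (@left_eigvec_semipos _ nu); rewrite ?oppr_eq0 //.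
  by rewrite linearN /= mulNmx gP scalerN.
by move=> b; rewrite mxE oppr_ge0 leNgt; apply: no_pos.
Qed.

End PositiveLeftEigenvectors.

(* A left
   eigenspace of dimension 2 would meet the hyperplane orthogonal to u, and
   left and right eigenspaces have the same dimension. *)
Lemma eigvec_span (F : fieldType) n (A : 'M[F]_n) lam (u v : 'cV[F]_n) :
  A *m u = lam *: u -> u != 0 -> A *m v = lam *: v ->
  (forall w : 'rV[F]_n, w != 0 -> w *m A = lam *: w -> w *m u != 0) ->
  exists c, v = c *: u.
Proof.
move=> Au u_nz Av left_pairs; set M := A - lam%:M.
have left_rank : (\rank (kermx M) <= 1)%N.
  rewrite leqNgt; apply/negP => rank_gt1.
  have := mxrank_mul_ker (kermx M) u; set W := (_ :&: _)%MS => rankW.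
  have W_nz : W != 0.
    rewrite -mxrank_eq0; apply/eqP => W0; move: rankW; rewrite W0 addn0 => eq_rank.
    by have := rank_leq_col (kermx M *m u); rewrite eq_rank leqNgt rank_gt1.
  have /sub_kermxP wM := submx_trans (nz_row_sub W) (capmxSl _ _).
  have /sub_kermxP wu := submx_trans (nz_row_sub W) (capmxSr _ _).
  have w_eig : nz_row W *m A = lam *: nz_row W.
    by apply/eqP; rewrite -subr_eq0 -mul_mx_scalar -mulmxBr wM.
  by have := left_pairs (nz_row W); rewrite nz_row_eq0 W_nz wu eqxx => /(_ isT w_eig).
have right_rank : (\rank (kermx M^T) <= 1)%N.
  by rewrite mxrank_ker mxrank_tr -mxrank_ker.
have in_ker (w : 'cV[F]_n) : A *m w = lam *: w -> (w^T <= kermx M^T)%MS.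
  by move=> Aw; apply/sub_kermxP; rewrite -trmx_mul mulmxBl Aw mul_scalar_mx subrr trmx0.
have ker_u : (kermx M^T <= u^T)%MS.
  have [_ <-] := mxrank_leqif_sup (in_ker u Au).
  rewrite rank_rV trmx_eq0 u_nz eqn_leq right_rank andbT.
  by have := mxrankS (in_ker u Au); rewrite rank_rV trmx_eq0 u_nz.
have /sub_rVP [c vc] := submx_trans (in_ker v Av) ker_u.
by exists c; rewrite -[v]trmxK vc linearZ /= trmxK.
Qed.

Section InnerProduct.
Variable R : rcfType.

Lemma dotv_mx n (u v : 'cV[R]_n) : dotv u v = (u^T *m v) 0 0.
Proof. by rewrite /dotv mxE; apply: eq_bigr => i _; rewrite mxE. Qed.

Lemma dotvNl n (u v : 'cV[R]_n) : dotv (- u) v = - dotv u v.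
Proof. by rewrite !dotv_mx linearN /= mulNmx mxE. Qed.

Lemma dotvNr n (u v : 'cV[R]_n) : dotv u (- v) = - dotv u v.
Proof. by rewrite !dotv_mx mulmxN mxE. Qed.

Lemma dotv_col_cone n m (Rm : 'M[R]_(n, m)) (h : 'cV[R]_n) (p : 'cV[R]_m) :
  dotv h (Rm *m p) = \sum_a (Rm^T *m h) a 0 * p a 0.
Proof.
rewrite dotv_mx mulmxA -[h^T *m Rm]trmxK trmx_mul trmxK mxE.
by apply: eq_bigr => a _; rewrite mxE.
Qed.

End InnerProduct.

Section Orientation.
Variables (R : rcfType) (n : nat).
Implicit Types (C : 'cV[R]_n -> Prop) (h r y : 'cV[R]_n).

Definition pos_on C h := forall y, C y -> y != 0 -> 0 < dotv h y.

Definition signed_pos_on C h := pos_on C h \/ pos_on C (- h).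

Definition signed_in C r := exists y, [/\ C y, y != 0 & (r = y \/ r = - y)].

Definition opp_cone C : 'cV[R]_n -> Prop := fun y => C (- y).

Lemma pos_on_opp C h : pos_on (opp_cone C) h <-> pos_on C (- h).
Proof.
split=> pos y Cy y_nz.
  by rewrite dotvNl -dotvNr pos /opp_cone ?opprK ?oppr_eq0.
by rewrite -[y]opprK dotvNr -dotvNl pos ?oppr_eq0.
Qed.

Lemma signed_pos_on_opp C h : signed_pos_on C h -> signed_pos_on (opp_cone C) h.
Proof. by rewrite /signed_pos_on !pos_on_opp opprK; case; [right | left]. Qed.

Lemma signed_in_opp C r : signed_in C r -> signed_in (opp_cone C) r.
Proof.
case=> y [Cy y_nz ry]; exists (- y); split; rewrite /opp_cone ?opprK ?oppr_eq0 //.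
by case: ry => ->; [right | left]; rewrite ?opprK.
Qed.

Lemma signed_pos_on_pm C h h' :
  h' = h \/ h' = - h -> signed_pos_on C h -> signed_pos_on C h'.
Proof. by case=> ->; rewrite /signed_pos_on ?opprK; case; [left | right | right | left]. Qed.

Lemma signed_in_pm C r r' : r' = r \/ r' = - r -> signed_in C r -> signed_in C r'.
Proof.
case=> -> // [y [Cy y_nz ry]]; exists y; split => //.
by case: ry => ->; rewrite ?opprK; [right | left].
Qed.

Lemma orient_functional C h y :
  signed_pos_on C h -> C y -> y != 0 -> 0 <= dotv h y -> pos_on C h.
Proof.
case=> // neg_pos Cy y_nz; have := neg_pos y Cy y_nz.
by rewrite dotvNl oppr_gt0 leNgt => ->.
Qed.

Lemma orient_vector C h r : pos_on C h -> signed_in C r -> 0 <= dotv h r -> C r /\ r != 0.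
Proof.
move=> pos [y [Cy y_nz [->|r_opp]]] // hr_ge0.
by move: hr_ge0; rewrite r_opp dotvNr oppr_ge0 leNgt pos.
Qed.

End Orientation.

Section Cones.
Variable R : rcfType.

Lemma solid_cone_detects n m (Rm : 'M[R]_(n, m)) : proper_cone (col_cone Rm) ->
  forall h : 'cV[R]_n, h != 0 ->
  exists2 p : 'cV[R]_m, (forall a, 0 <= p a 0) & dotv h (Rm *m p) != 0.
Proof.
case=> _ [x0 [eps eps_gt0 ball]] _ h /cV_nz_entry [i hi_nz].
have x0_in : col_cone Rm x0 by apply: ball => j; rewrite subrr normr0.
have [hx0_0|hx0_nz] := eqVneq (dotv h x0) 0; last first.
  by case: x0_in => p p_ge0 x0E; exists p; rewrite -?x0E.
pose y := x0 + (eps / 2) *: delta_mx i 0.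
have [p p_ge0 yE] : col_cone Rm y.
  apply: ball => j; rewrite /y !mxE [_ + _]addrC addKr normrM.
  case: eqP => _ /=; last by rewrite normr0 mulr0.
  by rewrite normr1 mulr1 ger0_norm ?divr_ge0 ?ltW //; lra.
exists p; rewrite // -yE /y !dotv_mx mulmxDr -scalemxAr -colE mxE.
rewrite -dotv_mx hx0_0 add0r !mxE mulf_neq0 // gt_eqF // divr_gt0 //; lra.
Qed.

(* In a pointed cone the image of a positive vector is nonzero, provided the
   cone is nontrivial: otherwise R (x - c p) = - R (c p) for small c > 0. *)
Lemma pointed_cone_pos_image n m (Rm : 'M[R]_(n, m)) (x : 'cV[R]_m) :
  proper_cone (col_cone Rm) -> (forall a, 0 < x a 0) ->
  (exists2 p : 'cV[R]_m, (forall a, 0 <= p a 0) & Rm *m p != 0) -> Rm *m x != 0.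
Proof.
case=> _ _ pointed x_gt0 [p p_ge0 Rp_nz]; apply/negP => /eqP Rx0.
have [c c_gt0 cp_le_x] := @ratio_lb _ _ (p + const_mx 1) x
  (fun a => ltac:(by rewrite !mxE ltr_wpDl)) x_gt0.
apply: (pointed (Rm *m (c *: p))).
- by exists (c *: p) => // a; rewrite mxE mulr_ge0 // ltW.
- by rewrite -scalemxAr scaler_eq0 negb_or gt_eqF.
exists (x - c *: p); last by rewrite mulmxBr Rx0 sub0r.
move=> a; have := cp_le_x a; rewrite !mxE mulrDr mulr1 subr_ge0.
by move/(le_trans _); apply; rewrite lerDl ltW.
Qed.

Lemma pos_on_col_cone n m (Rm : 'M[R]_(n, m)) (h : 'cV[R]_n) :
  (forall a, 0 < (Rm^T *m h) a 0) -> pos_on (col_cone Rm) h.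
Proof.
move=> g_gt0 y [p p_ge0 ->] Rp_nz; rewrite dotv_col_cone pos_dot_gt0 //.
by apply: contraNneq Rp_nz => ->; rewrite mulmx0.
Qed.

Lemma proper_col_cone_width n m (Rm : 'M[R]_(n, m)) (h : 'cV[R]_n) :
  proper_cone (col_cone Rm) -> h != 0 -> (0 < m)%N.
Proof.
move=> cone /(solid_cone_detects cone) [p _]; clear cone; case: m Rm p => // Rm p.
by rewrite [p]flatmx0 mulmx0 dotv_mx mulmx0 mxE eqxx.
Qed.

End Cones.

Section TildeConstruction.
Variables (R : rcfType) (n l : nat) (o : 'I_l).
Variables (rhat hhat rt ht : 'I_l -> 'cV[R]_n).
Hypothesis ht_o : ht o = hhat o.
Hypothesis rt_def :
  forall k, (rt k = rhat k \/ rt k = - rhat k) /\ 0 <= dotv (ht o) (rt k).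
Hypothesis ht_def : forall j, j != o ->
  (ht j = hhat j \/ ht j = - hhat j) /\ 0 <= dotv (ht j) (rt j).

(* Case where h~_1 is positive on C: then every r~_k lies in C and every
   h~_j is positive on C. *)
Lemma tilde_gram_pos_oriented (C : 'cV[R]_n -> Prop) :
  (forall i, signed_pos_on C (hhat i) /\ signed_in C (rhat i)) ->
  pos_on C (ht o) -> forall j k, 0 < dotv (ht j) (rt k).
Proof.
move=> signs ht_o_pos.
have rt_in k : C (rt k) /\ rt k != 0.
  case: (rt_def k) => rt_pm hr_ge0; apply: orient_vector ht_o_pos _ hr_ge0.
  exact: signed_in_pm rt_pm (proj2 (signs k)).
have ht_pos j : pos_on C (ht j).
  have [-> //|j_ne_o] := eqVneq j o.
  case: (ht_def j_ne_o) => ht_pm hr_ge0; case: (rt_in j) => Crj rj_nz.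
  exact: orient_functional (signed_pos_on_pm ht_pm (proj1 (signs j))) Crj rj_nz hr_ge0.
by move=> j k; case: (rt_in k) => Crk rk_nz; apply: ht_pos.
Qed.

(* General case: if instead -h~_1 is positive on C, reflect C. *)
Lemma tilde_gram_pos (C : 'cV[R]_n -> Prop) :
  (forall i, signed_pos_on C (hhat i) /\ signed_in C (rhat i)) ->
  forall j k, 0 < dotv (ht j) (rt k).
Proof.
move=> signs; case: (signed_pos_on_pm (or_introl ht_o) (proj1 (signs o))) => ht_o_pos.
  exact: tilde_gram_pos_oriented ht_o_pos.
apply: (@tilde_gram_pos_oriented (opp_cone C)); last exact/pos_on_opp.
by move=> i; case: (signs i) => hs rs; split; [apply: signed_pos_on_opp | apply: signed_in_opp].
Qed.

End TildeConstruction.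

Section DominantEigenvectors.
Variables (R : rcfType) (n m : nat) (Rm : 'M[R]_(n, m)) (A : 'M[R]_n).
Variables (lam alpha : R) (P : 'M[R]_m).
Hypotheses (dominant : strictly_dominant_eigenvalue A lam)
  (cone : proper_cone (col_cone Rm)).
Hypotheses (P_gt0 : forall a b, 0 < P a b) (intertwine : (alpha%:M + A) *m Rm = Rm *m P).
Variables (rho : R) (x : 'cV[R]_m).
Hypotheses (x_gt0 : forall a, 0 < x a 0) (Px : P *m x = rho *: x).

Lemma dominant_left_eigvec : exists2 h : 'cV[R]_n, h != 0 & h^T *m A = lam *: h^T.
Proof.
by case: dominant => /eigenvalueP [v vA v_nz] _ _; exists v^T; rewrite ?trmx_eq0 ?trmxK.
Qed.

Lemma perron_image_eigen : A *m (Rm *m x) = (rho - alpha) *: (Rm *m x).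
Proof.
have : (alpha%:M + A) *m (Rm *m x) = rho *: (Rm *m x).
  by rewrite mulmxA intertwine -mulmxA Px scalemxAr.
by rewrite mulmxDl mul_scalar_mx scalerBl => <-; rewrite addrC addKr.
Qed.

(* R x is nonzero since K is pointed. *)
Lemma perron_image_nz : Rm *m x != 0.
Proof.
apply: pointed_cone_pos_image cone x_gt0 _.
have [h h_nz _] := dominant_left_eigvec.
have [p p_ge0 hp_nz] := solid_cone_detects cone h_nz.
by exists p => //; apply: contraNneq hp_nz => ->; rewrite dotv_mx mulmx0 mxE.
Qed.

Lemma perron_shift_le : rho - alpha <= lam.
Proof.
apply: dominant_real_root_le dominant _.
exact: right_eigen_root perron_image_nz perron_image_eigen.
Qed.

(* R^T h is a left eigenvector of P for alpha + lam >= rho, hence has a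
   strict sign. *)
Lemma left_eig_cone_sign (h : 'cV[R]_n) : h != 0 -> h^T *m A = lam *: h^T ->
  (forall a, 0 < (Rm^T *m h) a 0) \/ (forall a, 0 < (Rm^T *m - h) a 0).
Proof.
move=> h_nz h_eig; set g := Rm^T *m h.
have gT : g^T = h^T *m Rm by rewrite trmx_mul trmxK.
have gP : g^T *m P = (alpha + lam) *: g^T.
  by rewrite gT -mulmxA -intertwine mulmxA mulmxDr mul_mx_scalar h_eig -scalerDl -scalemxAl.
have g_nz : g != 0.
  have [p _ hp_nz] := solid_cone_detects cone h_nz; apply: contraNneq hp_nz => g0.
  by rewrite dotv_col_cone -/g g0 big1 // => a _; rewrite mxE mul0r.
have := perron_shift_le; rewrite lerBlDl => le_rho.
by rewrite mulmxN; apply: left_eigvec_strict_sign gP g_nz le_rho.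
Qed.

Lemma left_eig_signed_pos_on (h : 'cV[R]_n) : h != 0 -> h^T *m A = lam *: h^T ->
  signed_pos_on (col_cone Rm) h.
Proof. by move=> h_nz /(left_eig_cone_sign h_nz) [] /pos_on_col_cone; [left | right]. Qed.

Lemma left_eig_pairing_nz (h : 'cV[R]_n) : h != 0 -> h^T *m A = lam *: h^T ->
  dotv h (Rm *m x) != 0.
Proof.
have x_in : col_cone Rm (Rm *m x) by exists x => // a; apply: ltW.
move=> h_nz /(left_eig_signed_pos_on h_nz) [] /(_ _ x_in perron_image_nz).
  by move=> /gt_eqF ->.
by rewrite dotvNl oppr_gt0 => /lt_eqF ->.
Qed.

Lemma perron_shift_eq : rho - alpha = lam.
Proof.
have [h h_nz h_eig] := dominant_left_eigvec.
have := left_eig_pairing_nz h_nz h_eig; rewrite dotv_mx => pair_nz.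
have /matrixP/(_ 0 0)/eqP : h^T *m (A *m (Rm *m x)) = (h^T *m A) *m (Rm *m x).
  by rewrite mulmxA.
rewrite perron_image_eigen h_eig -scalemxAr -scalemxAl !mxE -subr_eq0 -mulrBl.
by rewrite mxE in pair_nz; rewrite mulf_eq0 (negPf pair_nz) orbF subr_eq0 => /eqP.
Qed.

(* Every right eigenvector of lam is a nonzero multiple of R x. *)
Lemma right_eig_signed_in (r : 'cV[R]_n) : r != 0 -> A *m r = lam *: r ->
  signed_in (col_cone Rm) r.
Proof.
move=> r_nz r_eig; have u_eig := perron_image_eigen; rewrite perron_shift_eq in u_eig.
have [|c rc] := eigvec_span u_eig perron_image_nz r_eig.
  move=> w w_nz w_eig; have := left_eig_pairing_nz (h := w^T).
  by rewrite trmx_eq0 trmxK dotv_mx trmxK => /(_ w_nz w_eig); apply: contraNneq => ->; rewrite mxE.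
have c_nz : c != 0 by apply: contraNneq r_nz => c0; rewrite rc c0 scale0r.
have in_cone (d : R) : 0 < d -> col_cone Rm (Rm *m (d *: x)).
  by move=> d_gt0; exists (d *: x) => // a; rewrite mxE mulr_ge0 ?ltW.
have dx_nz (d : R) : d != 0 -> Rm *m (d *: x) != 0.
  by move=> d_nz; rewrite -scalemxAr scaler_eq0 negb_or d_nz perron_image_nz.
case: (ltrgtP c 0) => [c_lt0|c_gt0|c0]; last by rewrite c0 eqxx in c_nz.
  exists (Rm *m (- c *: x)); split.
  - by apply: in_cone; rewrite oppr_gt0.
  - by apply: dx_nz; rewrite oppr_eq0.
  - by right; rewrite rc -scalemxAr scaleNr opprK.
exists (Rm *m (c *: x)); split; [exact: in_cone | exact: dx_nz | left].
by rewrite rc -scalemxAr.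
Qed.

End DominantEigenvectors.

Unset Implicit Arguments.

Theorem proposition7 (R : rcfType) (n l : nat) (hl : (0 < l)%N)
  (A : 'I_l -> 'M[R]_n) (lam : 'I_l -> R)
  (rhat hhat rt ht : 'I_l -> 'cV[R]_n) :
  (forall i, strictly_dominant_eigenvalue (A i) (lam i)) ->
  (forall i, rhat i != 0 /\ A i *m rhat i = lam i *: rhat i) ->
  (forall i, hhat i != 0 /\ (hhat i)^T *m A i = lam i *: (hhat i)^T) ->
  (* construction of the tilde vectors; index 1 of the paper is Ordinal hl *)
  ht (Ordinal hl) = hhat (Ordinal hl) ->
  (forall k, (rt k = rhat k \/ rt k = - rhat k) /\
             0 <= dotv (ht (Ordinal hl)) (rt k)) ->
  (forall j, j != Ordinal hl ->
             (ht j = hhat j \/ ht j = - hhat j) /\ 0 <= dotv (ht j) (rt j)) ->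
  (exists m (Rm : 'M[R]_(n, m)),
      proper_cone (col_cone Rm) /\
      forall i, exists (alpha : R) (P : 'M[R]_m),
        (forall a b, 0 < P a b) /\ (alpha%:M + A i) *m Rm = Rm *m P) ->
  forall j k, 0 < dotv (ht j) (rt k).
Proof.
move=> dominant right_eig left_eig ht_o rt_def ht_def [m [Rm [cone intertwine]]].
apply: (tilde_gram_pos ht_o rt_def ht_def (C := col_cone Rm)) => i.
have [alpha [P [P_gt0 BR]]] := intertwine i.
have [rhat_nz rhat_eig] := right_eig i; have [hhat_nz hhat_eig] := left_eig i.
have [rho [x [_ x_gt0 Px]]] := perron (proper_col_cone_width cone hhat_nz) P_gt0.
split.
- exact: (left_eig_signed_pos_on (dominant i) cone P_gt0 BR x_gt0 Px hhat_nz hhat_eig).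
- exact: (right_eig_signed_in (dominant i) cone P_gt0 BR x_gt0 Px rhat_nz rhat_eig).
Qed.
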